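(* Consider a network of $C$ devices of which a set $\mathcal{K}$ of $K\le C$ devices act as data aggregators, each aggregator $k$ producing a prediction $\Psi_k(X;\theta,\mathcal{G}(t))\in\mathcal{Y}$ (a probability vector over classes) for input $X$. Under the device fault dynamic network $\mathcal{G}_r(t)$ with fault rate $r\in[0,1]$ (each device is present independently with probability $1-r$), the active set $\mathcal{A}$ consists of the aggregators present at the final round, so $\Pr(|\mathcal{A}|=0)=r^K$. Let $h=h_{\mathrm{rand}}$ be the post-processing that outputs the prediction of a uniformly random active aggregator, and outputs the marginal label distribution $p(Y)$ if $\mathcal{A}=\emptyset$. Define the dynamic risk $R_h(\theta;\mathcal{G})=\mathbb{E}_{X,Y,\mathcal{G},h}[\ell(h(\Psi(X;\theta,\mathcal{G})),Y)]$ for a loss $\ell$. Assume that the risk of each aggregator's predictor with faults is at least its risk without faults (i.e., on the fault-free base graph $\mathcal{G}_{\mathrm{base}}$). Then $$R_h(\theta;\mathcal{G}_r(t))\;\ge\;(1-r^K)\,R_h(\theta;\mathcal{G}_{\mathrm{base}})\;+\;r^K\,\mathbb{E}\big[\ell(Y,p(Y))\big],$$ where $\mathbb{E}[\ell(Y,p(Y))]$ is the risk of the random predictor that outputs the marginal label distribution.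
   Context: Data: $(X,Y)\sim p(X,Y)$, features split across devices. The dynamic network $\mathcal{G}(t)=(\mathcal{C}(t),\mathcal{E}(t))$ changes over discrete communication rounds $t$; in the device fault dynamic network with base topology $\mathcal{G}_{\mathrm{base}}=(\mathcal{C}_{\mathrm{base}},\mathcal{E}_{\mathrm{base}})$, each device $c\in\mathcal{C}_{\mathrm{base}}$ is in $\mathcal{C}_r(t)$ with probability $1-r$ and $\mathcal{E}_r(t)$ consists of base edges between present devices. The active set at the final round $T$ is the set of aggregators able to communicate their prediction to the external entity collecting the final output. The risk with $h_{\mathrm{rand}}$ on $\mathcal{G}_{\mathrm{base}}$ equals the average over aggregators of their individual fault-free risks. *)

From HB Require Import structures.
From mathcomp Require Import all_boot all_order all_algebra.
From mathcomp Require Import all_classical all_reals all_analysis.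
Set Implicit Arguments. Unset Strict Implicit. Unset Printing Implicit Defensive.
Import Order.TTheory GRing.Theory Num.Theory.
Local Open Scope classical_set_scope.
Local Open Scope ring_scope.

(* A graph on the devices 'I_C: set of present devices and edge relation. *)
Definition graph (C : nat) := ({set 'I_C} * rel 'I_C)%type.

(* A realization of the device fault dynamic network over rounds 0..T:
   for each round t, the set C_r(t) of present devices. *)
Definition traj (T C : nat) := {ffun 'I_T.+1 -> {set 'I_C}}.

Definition net_of (T C : nat) (E : rel 'I_C) (g : traj T C) : 'I_T.+1 -> graph C :=
  fun t => (g t, fun a b => [&& E a b, a \in g t & b \in g t]).

Definition active (T C : nat) (Kset : {set 'I_C}) (g : traj T C) : {set 'I_C} :=
  g ord_max :&: Kset.

Definition fault_prob {R : realType} (T C : nat) (r : R) (g : traj T C) : R :=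
  \prod_(t < T.+1) \prod_(c < C) (if c \in g t then 1 - r else r).

Definition base_traj (T C : nat) : traj T C := [ffun _ => (finset.setTfor 'I_C)].

Definition base_prob {R : realType} (T C : nat) (g : traj T C) : R :=
  (g == base_traj T C)%:R.

Definition marginal_Y {d} {Om : measurableType d} {R : realType}
  (P : probability Om R) (n : nat) (Y : Om -> 'I_n) : {ffun 'I_n -> R} :=
  [ffun y => fine (P (Y @^-1` [set y]))].

(* Loss of h_rand, averaged over its internal randomness (uniform choice of
   an active aggregator); outputs p(Y) if no aggregator is active. *)
Definition h_rand_loss {R : realType} (C n : nat) {TX : Type}
  (loss : {ffun 'I_n -> R} -> 'I_n -> R) (pY : {ffun 'I_n -> R})
  (Psik : 'I_C -> TX -> {ffun 'I_n -> R}) (A : {set 'I_C}) (x : TX) (y : 'I_n) : R :=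
  if A == finset.set0 then loss pY y
  else (#|A|%:R)^-1 * \sum_(k in A) loss (Psik k x) y.

(* Dynamic risk R_h(theta; G) = E_{G} E_{X,Y} E_h [loss(h(Psi(X;theta,G)),Y)],
   where the network distribution is given by weights w on realizations
   (independent of the data). *)
Definition dynamic_risk {d} {Om : measurableType d} {R : realType}
  (P : probability Om R) {TX : Type} (X : Om -> TX) (n : nat) (Y : Om -> 'I_n)
  {Theta : Type} (theta : Theta) (C T : nat) (E : rel 'I_C) (Kset : {set 'I_C})
  (Psi : Theta -> 'I_C -> ('I_T.+1 -> graph C) -> TX -> {ffun 'I_n -> R})
  (loss : {ffun 'I_n -> R} -> 'I_n -> R) (w : traj T C -> R) : \bar R :=
  (\sum_(g : traj T C)
     (w g)%:E * \int[P]_om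
        (h_rand_loss loss (marginal_Y P Y) (fun k => Psi theta k (net_of E g))
           (active Kset g) (X om) (Y om))%:E)%E.

Definition agg_risk {d} {Om : measurableType d} {R : realType}
  (P : probability Om R) {TX : Type} (X : Om -> TX) (n : nat) (Y : Om -> 'I_n)
  {Theta : Type} (theta : Theta) (C T : nat) (E : rel 'I_C)
  (Psi : Theta -> 'I_C -> ('I_T.+1 -> graph C) -> TX -> {ffun 'I_n -> R})
  (loss : {ffun 'I_n -> R} -> 'I_n -> R) (k : 'I_C) (g : traj T C) : \bar R :=
  \int[P]_om (loss (Psi theta k (net_of E g) (X om)) (Y om))%:E.

From HB Require Import structures.
From mathcomp Require Import all_boot all_order all_algebra.
From mathcomp Require Import all_classical all_reals all_analysis.
From mathcomp Require Import fingroup perm measurable_realfun.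
Import Order.TTheory GRing.Theory Num.Theory.
Local Open Scope ring_scope.

(* Freeze every aggregator's risk at its fault-free value a_k; by hypothesis
   this can only lower the risk. The risk of h_rand on a realization with
   active set A is then [A = {}] E[l(Y, p(Y))] + sum_k pi_A(k) a_k, where
   pi_A(k) = [k in A] / |A| is the probability that h_rand answers with k.
   Under the fault model P(A = {}) = r^K, and the fault model is invariant under
   relabellings of the devices that fix the set of aggregators, so E[pi_A(k)]
   is the same for all K aggregators; as these expectations add up to
   P(A <> {}) = 1 - r^K, each equals (1 - r^K) / K = (1 - r^K) pi_K(k), and the
   fault-free network is exactly the one with A = K. *)

Lemma sum_set_prod_if (R : comNzRingType) (I : finType) (x y : I -> R) :
  \sum_(S : {set I}) \prod_i (if i \in S then x i else y i) = \prod_i (x i + y i).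
Proof.
have -> : \prod_i (x i + y i) = \prod_i \sum_(b : bool) (if b then x i else y i).
  by apply: eq_bigr => i _; rewrite big_bool /= addrC.
rewrite bigA_distr_bigA (reindex (fun S : {set I} => [ffun i => i \in S])) /=.
  by apply: eq_bigr => S _; apply: eq_bigr => i _; rewrite ffunE.
exists (fun f : {ffun I -> bool} => [set i | f i]) => [S _|f _].
  by apply/setP => i; rewrite inE ffunE.
by apply/ffunP => i; rewrite ffunE inE.
Qed.

Lemma sum_traj_prod_if (R : comNzRingType) (T C : nat) (x y : 'I_T.+1 -> 'I_C -> R) :
  \sum_(g : traj T C) \prod_t \prod_c (if c \in g t then x t c else y t c)
  = \prod_t \prod_c (x t c + y t c).
Proof.
under [RHS]eq_bigr do rewrite -sum_set_prod_if.
by rewrite bigA_distr_bigA.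
Qed.

Definition pick_prob {R : numFieldType} {I : finType} (A : {set I}) (k : I) : R :=
  (k \in A)%:R / #|A|%:R.

Section PickProb.
Context {R : numFieldType} {I : finType}.
Implicit Types (A : {set I}) (k : I).

Lemma pick_prob_ge0 A k : 0 <= pick_prob A k :> R.
Proof. by rewrite divr_ge0 ?ler0n. Qed.

Lemma pick_prob_out A k : k \notin A -> pick_prob A k = 0 :> R.
Proof. by move/negbTE => kA; rewrite /pick_prob kA mul0r. Qed.

Lemma sum_pick_prob A : \sum_k pick_prob A k = (A != finset.set0)%:R :> R.
Proof.
rewrite (bigID (mem A)) /= [X in _ + X]big1 => [|k]; last exact: pick_prob_out.
rewrite addr0 (eq_bigr (fun _ => (#|A|%:R)^-1)) => [|k kA]; last first.
  by rewrite /pick_prob kA mul1r.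
rewrite sumr_const; have [->|A0] := eqVneq A finset.set0.
  by rewrite cards0.
by rewrite -[LHS]mulr_natr mulVf // pnatr_eq0 cards_eq0.
Qed.

Lemma sum_pick_prob_mul A (f : I -> R) :
  \sum_k pick_prob A k * f k = (#|A|%:R)^-1 * \sum_(k in A) f k.
Proof.
rewrite mulr_sumr [RHS]big_mkcond; apply: eq_bigr => k _ /=.
by rewrite /pick_prob; case: (k \in A); rewrite ?mul1r ?mul0r ?mulr0.
Qed.

Lemma pick_prob_preim (s : {perm I}) A k : pick_prob (s @^-1: A) k = pick_prob A (s k) :> R.
Proof. by rewrite /pick_prob card_preimset ?inE //; exact: perm_inj. Qed.

End PickProb.

Section FaultNetwork.
Context {R : realType} {T C : nat} (r : R).
Implicit Types (g : traj T C) (K : {set 'I_C}).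

Definition traj_preim (s : {perm 'I_C}) (g : traj T C) : traj T C :=
  [ffun t => s @^-1: g t].

Lemma traj_preimK (s : {perm 'I_C}) :
  cancel (traj_preim s) (traj_preim s^-1%g).
Proof. by move=> g; apply/ffunP => t; apply/setP => c; rewrite !ffunE !inE permKV. Qed.

Lemma active_base (K : {set 'I_C}) : active K (base_traj T C) = K.
Proof. by apply/setP => c; rewrite !inE ffunE inE. Qed.

Lemma active_preim (K : {set 'I_C}) (s : {perm 'I_C}) (g : traj T C) :
  (forall c, (s c \in K) = (c \in K)) -> active K (traj_preim s g) = s @^-1: active K g.
Proof. by move=> sK; apply/setP => c; rewrite !inE ffunE inE sK. Qed.

Lemma fault_prob_ge0 g : 0 <= r <= 1 -> 0 <= fault_prob r g.
Proof.
case/andP => r0 r1; apply: prodr_ge0 => t _; apply: prodr_ge0 => c _.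
by case: ifP; rewrite ?subr_ge0.
Qed.

Lemma sum_fault_prob : \sum_(g : traj T C) fault_prob r g = 1.
Proof.
rewrite /fault_prob (@sum_traj_prod_if _ T C (fun _ _ => 1 - r) (fun _ _ => r)).
by rewrite big1 // => t _; rewrite big1 // => c _; rewrite subrK.
Qed.

Lemma sum_fault_prob_active_eq0 K :
  \sum_(g : traj T C) fault_prob r g * (active K g == finset.set0)%:R = r ^+ #|K|.
Proof.
(* Zeroing the weight of the aggregators present at round T turns each
   fault_prob r g into fault_prob r g * [active K g = set0]. *)
pose x (t : 'I_T.+1) (c : 'I_C) : R := (1 - r) * ((t != ord_max) || (c \notin K))%:R.
have factor g : fault_prob r g * (active K g == finset.set0)%:R
    = \prod_t \prod_c (if c \in g t then x t c else r).
  rewrite /fault_prob; have [A0|/set0Pn[c]] := eqVneq (active K g) finset.set0.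
    rewrite mulr1; apply: eq_bigr => t _; apply: eq_bigr => c _.
    case: ifP => // cg; rewrite /x; have [et|] := eqVneq t ord_max; last by rewrite mulr1.
    case cK: (c \in K); last by rewrite mulr1.
    by move/setP: A0 => /(_ c); rewrite !inE -et cg cK.
  rewrite !inE mulr0 => /andP[cg cK].
  by rewrite (bigD1 ord_max) //= (bigD1 c) //= cg /x eqxx cK !mulr0 !mul0r.
rewrite (eq_bigr _ (fun g _ => factor g)) sum_traj_prod_if (bigD1 ord_max) //=.
rewrite [X in _ * X]big1 => [|t tn]; last by rewrite big1 // => c _; rewrite /x tn mulr1 subrK.
rewrite mulr1 -prodr_const [RHS]big_mkcond /x eqxx; apply: eq_bigr => c _.
by case: (c \in K); rewrite ?mulr0 ?add0r ?mulr1 ?subrK.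
Qed.

Lemma fault_prob_preim (s : {perm 'I_C}) g : fault_prob r (traj_preim s g) = fault_prob r g.
Proof.
apply: eq_bigr => t _; rewrite [RHS](reindex_inj (@perm_inj _ s)).
by apply: eq_bigr => c _; rewrite ffunE inE.
Qed.

Lemma expected_pick_prob_perm K (s : {perm 'I_C}) k :
  (forall c, (s c \in K) = (c \in K)) ->
  \sum_(g : traj T C) fault_prob r g * pick_prob (active K g) (s k)
  = \sum_(g : traj T C) fault_prob r g * pick_prob (active K g) k.
Proof.
move=> sK; rewrite [RHS](reindex_inj (can_inj (traj_preimK s))).
by apply: eq_bigr => g _; rewrite fault_prob_preim active_preim // pick_prob_preim.
Qed.

Lemma expected_pick_prob K k :
  \sum_(g : traj T C) fault_prob r g * pick_prob (active K g) k
  = (1 - r ^+ #|K|) * pick_prob K k.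
Proof.
pose e k := \sum_(g : traj T C) fault_prob r g * pick_prob (active K g) k.
have e_out k' : k' \notin K -> e k' = 0.
  move=> k'K; rewrite /e big1 // => g _; rewrite pick_prob_out ?mulr0 //.
  by apply: contra k'K; rewrite inE => /andP[].
have [kK|kK] := boolP (k \in K); last by rewrite -/(e k) e_out // pick_prob_out ?mulr0.
have e_sym k' : k' \in K -> e k' = e k.
  move=> k'K; rewrite /e -[in LHS](tpermL k k') expected_pick_prob_perm // => c.
  by case: tpermP => [->|->|]; rewrite ?kK ?k'K.
have e_sum : \sum_k' e k' = 1 - r ^+ #|K|.
  rewrite exchange_big /= -(sum_fault_prob) -(sum_fault_prob_active_eq0 K) -sumrB.
  apply: eq_bigr => g _; rewrite -mulr_sumr sum_pick_prob.
  by case: eqP; rewrite ?mulr0 ?mulr1 ?subr0 ?subrr.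
rewrite -/(e k) -e_sum (bigID (mem K)) /= [X in _ + X]big1 => [|k']; last exact: e_out.
rewrite addr0 (eq_bigr _ e_sym) sumr_const -[e k *+ _]mulr_natr /pick_prob kK mul1r mulfK //.
by rewrite pnatr_eq0 -lt0n card_gt0; apply/set0Pn; exists k.
Qed.

End FaultNetwork.

Lemma ge0_sume_exchange_mul (R : realType) (I J : finType) (w : I -> R)
    (s : I -> J -> R) (a : J -> \bar R) :
  (forall i, 0 <= w i) -> (forall i j, 0 <= s i j) -> (forall j, 0 <= a j)%E ->
  (\sum_i (w i)%:E * \sum_j (s i j)%:E * a j = \sum_j (\sum_i w i * s i j)%:E * a j)%E.
Proof.
move=> w0 s0 a0; transitivity (\sum_i \sum_j (w i * s i j)%:E * a j)%E.
  apply: eq_bigr => i _; rewrite ge0_sume_distrr => [|j _]; last first.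
    by rewrite mule_ge0 ?lee_fin.
  by apply: eq_bigr => j _; rewrite EFinM muleA.
rewrite exchange_big; apply: eq_bigr => j _ /=.
by rewrite -ge0_sume_distrl ?sumEFin // => i _; rewrite lee_fin mulr_ge0.
Qed.

(* The risk of h_rand with active set A when the fallback p(Y) has risk M and
   aggregator k has risk a k. *)
Definition h_rand_mix {R : realType} {I : finType} (M : \bar R) (a : I -> \bar R)
    (A : {set I}) : \bar R :=
  (((A == finset.set0)%:R)%:E * M + \sum_k (pick_prob A k)%:E * a k)%E.

Lemma expected_h_rand_mix (R : realType) (T C : nat) (r : R) (K : {set 'I_C})
    (M : \bar R) (a : 'I_C -> \bar R) :
  0 <= r <= 1 -> (0 <= M)%E -> (forall k, 0 <= a k)%E ->
  (\sum_(g : traj T C) (fault_prob r g)%:E * h_rand_mix M a (active K g)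
   = (r ^+ #|K|)%:E * M + (1 - r ^+ #|K|)%:E * h_rand_mix M a K)%E.
Proof.
move=> r01 M0 a0; have w0 (g : traj T C) := fault_prob_ge0 r g r01.
have pick_ge0 (A : {set 'I_C}) : (0 <= \sum_k (pick_prob A k)%:E * a k)%E.
  by rewrite sume_ge0 // => k _; rewrite mule_ge0 ?lee_fin ?pick_prob_ge0.
rewrite /h_rand_mix.
under eq_bigr => g _ do rewrite ge0_muleDr ?mule_ge0 ?lee_fin //.
rewrite big_split /= ge0_sume_exchange_mul //; last by move=> g k; apply: pick_prob_ge0.
rewrite ge0_muleDr ?mule_ge0 ?lee_fin // addeA muleA -EFinM.
have -> : ((1 - r ^+ #|K|) * (K == finset.set0)%:R = 0)%R.
  by case: eqP => [->|]; rewrite ?cards0 ?expr0 ?subrr ?mul0r ?mulr0.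
rewrite mul0e adde0 ge0_sume_distrr => [|k _]; last by rewrite mule_ge0 ?lee_fin ?pick_prob_ge0.
congr (_ + _)%E; last by apply: eq_bigr => k _; rewrite expected_pick_prob muleA -EFinM.
under eq_bigr do rewrite muleA -EFinM.
by rewrite -ge0_sume_distrl ?sumEFin ?sum_fault_prob_active_eq0 // => g _; rewrite lee_fin mulr_ge0.
Qed.

Lemma h_rand_mix_le (R : realType) (I : finType) (M : \bar R) (a b : I -> \bar R)
    (A : {set I}) :
  (forall k, k \in A -> a k <= b k)%E -> (h_rand_mix M a A <= h_rand_mix M b A)%E.
Proof.
move=> ab; apply: leeD2l; apply: lee_sum => k _.
have [kA|kA] := boolP (k \in A); last by rewrite pick_prob_out // !mul0e.
by apply: lee_wpmul2l; rewrite ?lee_fin ?pick_prob_ge0 ?ab.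
Qed.

Lemma h_rand_lossE (R : realType) (C n : nat) (TX : Type)
    (loss : {ffun 'I_n -> R} -> 'I_n -> R) (pY : {ffun 'I_n -> R})
    (Psik : 'I_C -> TX -> {ffun 'I_n -> R}) (A : {set 'I_C}) (x : TX) (y : 'I_n) :
  h_rand_loss loss pY Psik A x y
  = (A == finset.set0)%:R * loss pY y + \sum_k pick_prob A k * loss (Psik k x) y.
Proof.
rewrite /h_rand_loss sum_pick_prob_mul; case: eqP => [->|_].
  by rewrite big_pred0 ?mulr0 ?addr0 ?mul1r // => k; rewrite inE.
by rewrite mul0r add0r.
Qed.

Local Open Scope classical_set_scope.

Section Integrals.
Context {d : measure_display} {Om : measurableType d} {R : realType}.
Variable mu : {measure set Om -> \bar R}.

Lemma ge0_integral_sum_mul (I : finType) (c : I -> R) (f : I -> Om -> R) :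
  (forall i, 0 <= c i) -> (forall i x, 0 <= f i x) ->
  (forall i, measurable_fun setT (f i)) ->
  (\int[mu]_x (\sum_i c i * f i x)%:E = \sum_i (c i)%:E * \int[mu]_x (f i x)%:E)%E.
Proof.
move=> c0 f0 mf; under eq_integral do rewrite -sumEFin.
rewrite ge0_integral_sum // => [|i|i x _]; last 2 first.
- by apply: measurableT_comp => //; exact: (measurable_funM (measurable_cst _) (mf i)).
- by rewrite lee_fin mulr_ge0.
apply: eq_bigr => i _; under eq_integral do rewrite EFinM.
by rewrite ge0_integralZl ?lee_fin // => [|x _]; [exact: measurableT_comp | rewrite lee_fin].
Qed.

Lemma integral_h_rand_loss (n : nat) (TX : Type) (X : Om -> TX) (Y : Om -> 'I_n)
    (C : nat) (loss : {ffun 'I_n -> R} -> 'I_n -> R) (pY : {ffun 'I_n -> R})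
    (Psik : 'I_C -> TX -> {ffun 'I_n -> R}) (A : {set 'I_C}) :
  (forall p y, 0 <= loss p y) ->
  (forall k, measurable_fun setT (fun x => loss (Psik k (X x)) (Y x))) ->
  measurable_fun setT (fun x => loss pY (Y x)) ->
  (\int[mu]_x (h_rand_loss loss pY Psik A (X x) (Y x))%:E
   = h_rand_mix (\int[mu]_x (loss pY (Y x))%:E)
       (fun k => \int[mu]_x (loss (Psik k (X x)) (Y x))%:E) A)%E.
Proof.
move=> loss0 mloss mlossY; under eq_integral do rewrite h_rand_lossE EFinD.
rewrite ge0_integralD //; first last.
- apply: measurableT_comp => //; apply: measurable_sum => k.
  exact: measurable_funM.
- by move=> x _; rewrite lee_fin; apply: sumr_ge0 => k _; rewrite mulr_ge0 // pick_prob_ge0.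
- by apply: measurableT_comp => //; exact: measurable_funM.
- by move=> x _; rewrite lee_fin mulr_ge0.
rewrite ge0_integral_sum_mul // => [|k]; last exact: pick_prob_ge0.
congr (_ + _)%E; under eq_integral do rewrite EFinM.
by rewrite ge0_integralZl ?lee_fin // => [|x _]; [exact: measurableT_comp | rewrite lee_fin].
Qed.

End Integrals.

Theorem proposition1 (d : measure_display) (Om : measurableType d) (R : realType)
  (P : probability Om R) (TX : Type) (X : Om -> TX) (n : nat) (Y : Om -> 'I_n)
  (Theta : Type) (theta : Theta) (C T : nat) (E : rel 'I_C) (Kset : {set 'I_C})
  (Psi : Theta -> 'I_C -> ('I_T.+1 -> graph C) -> TX -> {ffun 'I_n -> R})
  (loss : {ffun 'I_n -> R} -> 'I_n -> R) (r : R) :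
  0 <= r <= 1 ->
  (forall p y, 0 <= loss p y) ->
  (forall y : 'I_n, measurable (Y @^-1` [set y])) ->
  (forall (k : 'I_C) (g : traj T C),
     measurable_fun setT (fun om => loss (Psi theta k (net_of E g) (X om)) (Y om))) ->
  measurable_fun setT (fun om => loss (marginal_Y P Y) (Y om)) ->
  (forall (g : traj T C) (k : 'I_C), k \in active Kset g ->
     (agg_risk P X Y theta E Psi loss k (base_traj T C)
      <= agg_risk P X Y theta E Psi loss k g)%E) ->
  ((1 - r ^+ #|Kset|)%:E * dynamic_risk P X Y theta E Kset Psi loss (@base_prob R T C)
   + (r ^+ #|Kset|)%:E * \int[P]_om (loss (marginal_Y P Y) (Y om))%:E
   <= dynamic_risk P X Y theta E Kset Psi loss (fault_prob r))%E.
Proof.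
move=> r01 loss0 _ mloss mlossY base_le.
set M := (\int[P]_om (loss (marginal_Y P Y) (Y om))%:E)%E.
pose a g k := agg_risk P X Y theta E Psi loss k g.
have a_ge0 g k : (0 <= a g k)%E by apply: integral_ge0 => om _; rewrite lee_fin.
have M_ge0 : (0 <= M)%E by apply: integral_ge0 => om _; rewrite lee_fin.
have risk g : (\int[P]_om (h_rand_loss loss (marginal_Y P Y)
      (fun k => Psi theta k (net_of E g)) (active Kset g) (X om) (Y om))%:E
    = h_rand_mix M (a g) (active Kset g))%E.
  exact: integral_h_rand_loss.
have -> : dynamic_risk P X Y theta E Kset Psi loss (@base_prob R T C)
    = h_rand_mix M (a (base_traj T C)) Kset.
  rewrite /dynamic_risk (bigD1 (base_traj T C)) //= big1 => [|g /negbTE gb]; last first.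
    by rewrite /base_prob gb mul0e.
  by rewrite /base_prob eqxx mul1e adde0 risk active_base.
rewrite addeC -(@expected_h_rand_mix _ T) //; apply: lee_sum => g _.
rewrite risk; apply: lee_wpmul2l; first by rewrite lee_fin fault_prob_ge0.
exact: h_rand_mix_le (base_le g).
Qed.
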